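(* Let $\mathbb{F}$ be the countable fan and $\mathsf{2}$ the discrete space $\{\mathtt{0},\mathtt{1}\}$. Let $(h_n)_n$ converge to $h_\infty$ in $\mathsf{2}^{\mathbb{N}\times\mathbb{F}}$. Then for every $k\in\mathbb{N}$ there exists $m\in\mathbb{N}$ such that $h_n(k,a,b)=h_\infty(k,\infty,\infty)$ for all $n\ge m$ (including $n=\infty$), all $a\ge m$ and all $b\in\mathbb{N}$.
   Context: The countable fan $\mathbb{F}$ has underlying set $\mathbb{N}^2\cup\{(\infty,\infty)\}$ and the metric $d((a,b),(\infty,\infty))=2^{-a}$, $d((a,b),(a',b'))=\max\{2^{-a},2^{-a'}\}$ for distinct $(a,b),(a',b')\in\mathbb{N}^2$. $\mathbb{N}$ is discrete. $\mathsf{2}^{\mathbb{N}\times\mathbb{F}}$ is the exponential in the category QCB (quotients of countably based spaces): the set of continuous maps $\mathbb{N}\times\mathbb{F}\to\mathsf{2}$ with the sequentialisation of the compact-open topology. *)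

From Stdlib Require Import Reals List.
Open Scope R_scope.

(** The countable fan F: points (a,b) in N^2 together with (oo,oo). *)
Inductive fan : Type :=
| Pt : nat -> nat -> fan
| Inf : fan.

Definition fan_dist (x y : fan) : R :=
  match x, y with
  | Inf, Inf => 0
  | Pt a _, Inf => (/2) ^ a
  | Inf, Pt a _ => (/2) ^ a
  | Pt a b, Pt a' b' =>
      if (Nat.eqb a a' && Nat.eqb b b')%bool then 0 else Rmax ((/2) ^ a) ((/2) ^ a')
  end.

Definition fan_open (U : fan -> Prop) : Prop :=
  forall x, U x -> exists r, 0 < r /\ forall y, fan_dist x y < r -> U y.

(** The space X = N x F (N discrete, product topology). *)
Definition X : Type := (nat * fan)%type.

Definition X_open (U : X -> Prop) : Prop :=
  forall k : nat, fan_open (fun p => U (k, p)).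

Definition X_compact (K : X -> Prop) : Prop :=
  forall (I : Type) (V : I -> X -> Prop),
    (forall i, X_open (V i)) ->
    (forall x, K x -> exists i, V i x) ->
    exists l : list I, forall x, K x -> exists i, In i l /\ V i x.

(** Continuous maps X -> 2 (2 discrete: every subset of 2 is open). *)
Definition X_continuous (h : X -> bool) : Prop :=
  forall V : bool -> Prop, X_open (fun x => V (h x)).

Definition C2 : Type := { h : X -> bool | X_continuous h }.

Definition ev (f : C2) : X -> bool := proj1_sig f.

(** Convergence of sequences in the compact-open topology: a sequence
    converges iff it is eventually in every subbasic open set
    [K,U] = { f | f(K) subset U } (K compact, U open in 2) containing the limit. *)
Definition co_converges (f : nat -> C2) (g : C2) : Prop :=
  forall (K : X -> Prop) (U : bool -> Prop),
    X_compact K ->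
    (forall x, K x -> U (ev g x)) ->
    exists N : nat, forall n, (N <= n)%nat -> forall x, K x -> U (ev (f n) x).

(** Sequentially open sets of the compact-open topology (= opens of its
    sequentialization). *)
Definition seq_open (W : C2 -> Prop) : Prop :=
  forall (f : nat -> C2) (g : C2), co_converges f g -> W g ->
    exists N : nat, forall n, (N <= n)%nat -> W (f n).

(** Convergence in the QCB exponential 2^(N x F), i.e. in the
    sequentialization of the compact-open topology. *)
Definition exp_converges (f : nat -> C2) (g : C2) : Prop :=
  forall W : C2 -> Prop, seq_open W -> W g ->
    exists N : nat, forall n, (N <= n)%nat -> W (f n).

From Stdlib Require Import Reals List.
From Stdlib Require Import Classical ClassicalEpsilon Lia Lra.

(* If the conclusion failed, there would be points (k, Pt a_i b_i) with a_i -> oo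
   and indices n_i -> oo such that h_{n_i} differs from h_oo(k, oo) there.  The
   set K of these points together with (k, oo) is compact (a convergent sequence
   with its limit), and by continuity of h_oo, h_oo maps K to h_oo(k, oo) once
   a_i is large.  So the subbasic compact-open set [K, {h_oo(k, oo)}] is a
   sequentially open neighbourhood of h_oo which the h_{n_i} all avoid. *)

Lemma pow_half_eventually_lt (r : R) :
  0 < r -> exists M : nat, forall a, (M <= a)%nat -> (/2) ^ a < r.
Proof.
  intros Hr.
  destruct (pow_lt_1_zero (/2)) with (y := r) as [M HM]; [rewrite Rabs_right; lra | exact Hr |].
  exists M. intros a Ha.
  eapply Rle_lt_trans; [apply Rle_abs | exact (HM a Ha)].
Qed.

Lemma fan_open_near_Inf (U : fan -> Prop) :
  fan_open U -> U Inf -> exists M : nat, forall a b, (M <= a)%nat -> U (Pt a b).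
Proof.
  intros HU HInf.
  destruct (HU Inf HInf) as [r [Hr Hball]].
  destruct (pow_half_eventually_lt r Hr) as [M HM].
  exists M. intros a b Ha. apply Hball, HM, Ha.
Qed.

Lemma C2_eventually_const_near_Inf (g : C2) (k : nat) :
  exists M : nat, forall a b, (M <= a)%nat -> ev g (k, Pt a b) = ev g (k, Inf).
Proof.
  destruct g as [g Hg].
  exact (fan_open_near_Inf _ (Hg (fun c => c = g (k, Inf)) k) eq_refl).
Qed.

Lemma X_compact_sequence_with_limit (k : nat) (a b : nat -> nat) :
  (forall M, exists N, forall i, (N <= i)%nat -> (M <= a i)%nat) ->
  X_compact (fun x => x = (k, Inf) \/ exists i, x = (k, Pt (a i) (b i))).
Proof.
  intros Ha I V HV Hcov.
  destruct (Hcov (k, Inf) (or_introl eq_refl)) as [j0 Hj0].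
  destruct (fan_open_near_Inf _ (HV j0 k) Hj0) as [M HM].
  destruct (Ha M) as [N HN].
  destruct (choice (fun i j => V j (k, Pt (a i) (b i))))
    as [cov Hcov_pt]; [intro i; apply Hcov; right; exists i; reflexivity |].
  exists (j0 :: map cov (seq 0 N)).
  intros x [-> | [i ->]].
  - exists j0. split; [left; reflexivity | exact Hj0].
  - destruct (Compare_dec.le_lt_dec N i) as [HNi | HiN].
    + exists j0. split; [left; reflexivity | apply HM, HN, HNi].
    + exists (cov i). split; [right; apply in_map, in_seq; lia | apply Hcov_pt].
Qed.

Lemma co_subbasic_seq_open (K : X -> Prop) (U : bool -> Prop) :
  X_compact K -> seq_open (fun g => forall x, K x -> U (ev g x)).
Proof. intros HK f g Hfg Kg. exact (Hfg K U HK Kg). Qed.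

Lemma exp_converges_co (h : nat -> C2) (g : C2) (K : X -> Prop) (U : bool -> Prop) :
  exp_converges h g -> X_compact K -> (forall x, K x -> U (ev g x)) ->
  exists N : nat, forall n, (N <= n)%nat -> forall x, K x -> U (ev (h n) x).
Proof. intros Hconv HK Kg. exact (Hconv _ (co_subbasic_seq_open K U HK) Kg). Qed.

Lemma exp_converges_uniformly_near_Inf (h : nat -> C2) (hinf : C2) (k : nat) :
  exp_converges h hinf ->
  exists m : nat, forall n a b, (m <= n)%nat -> (m <= a)%nat ->
    ev (h n) (k, Pt a b) = ev hinf (k, Inf).
Proof.
  intros Hconv.
  set (c := ev hinf (k, Inf)).
  destruct (C2_eventually_const_near_Inf hinf k) as [m0 Hm0].
  apply NNPP. intros Hnot.
  assert (Hbad : forall m, exists t : nat * nat * nat,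
    let '(n, a, b) := t in (m <= n)%nat /\ (m + m0 <= a)%nat /\ ev (h n) (k, Pt a b) <> c).
  { intros m. apply NNPP. intros Hnone. apply Hnot. exists (m + m0)%nat.
    intros n a b Hn Ha. apply NNPP. intros Hne. apply Hnone.
    exists (n, a, b). repeat split; [lia | lia | exact Hne]. }
  destruct (choice _ Hbad) as [t Ht].
  set (a := fun i => snd (fst (t i))).
  set (b := fun i => snd (t i)).
  assert (Ht_bounds : forall i, (i <= fst (fst (t i)))%nat /\ (i + m0 <= a i)%nat
                                /\ ev (h (fst (fst (t i)))) (k, Pt (a i) (b i)) <> c).
  { intros i. specialize (Ht i). unfold a, b. destruct (t i) as [[n a'] b']. exact Ht. }
  assert (HK : X_compact (fun x => x = (k, Inf) \/ exists i, x = (k, Pt (a i) (b i)))).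
  { apply X_compact_sequence_with_limit. intros M. exists M. intros i Hi.
    destruct (Ht_bounds i) as [_ [Hai _]]. lia. }
  destruct (exp_converges_co h hinf _ (fun v => v = c) Hconv HK) as [N HN].
  - intros x [-> | [i ->]]; [reflexivity |].
    apply Hm0. destruct (Ht_bounds i) as [_ [Hai _]]. lia.
  - destruct (Ht_bounds N) as [HnN [_ Hne]].
    apply Hne, (HN _ HnN). right. exists N. reflexivity.
Qed.

Theorem lemma3p5 (h : nat -> C2) (hinf : C2) :
  exp_converges h hinf ->
  forall k : nat, exists m : nat,
    (forall n, (m <= n)%nat -> forall a, (m <= a)%nat -> forall b,
        ev (h n) (k, Pt a b) = ev hinf (k, Inf)) /\
    (forall a, (m <= a)%nat -> forall b,
        ev hinf (k, Pt a b) = ev hinf (k, Inf)).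
Proof.
  intros Hconv k.
  destruct (exp_converges_uniformly_near_Inf h hinf k Hconv) as [m1 Hm1].
  destruct (C2_eventually_const_near_Inf hinf k) as [m0 Hm0].
  exists (Nat.max m0 m1). split.
  - intros n Hn a Ha b. apply Hm1; lia.
  - intros a Ha b. apply Hm0; lia.
Qed.
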